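(* Let $k>l\ge0$ be integers, $\xi\in\mathbb{C}$, $f:\mathbb{N}\to[0,\infty)$, and $A=\xi(a^\dagger)^ka^l+\xi^*(a^\dagger)^la^k+f(a^\dagger a)$ with domain $\mathcal{D}_0$. Then $A$ has equal deficiency indices $\dim\operatorname{Ran}(A+i)^\perp=\dim\operatorname{Ran}(A-i)^\perp$, and thus admits self-adjoint extensions.
   Context: $\mathbb{N}=\{0,1,2,\dots\}$. $\mathcal{H}$ is a separable complex Hilbert space with orthonormal basis $(\phi_n)_{n\in\mathbb{N}}$; $\mathcal{D}_0$ is the set of finite linear combinations of the $\phi_n$. The operators $a,a^\dagger$ have domain $\mathcal{D}_0$ and act by $a\phi_n=\sqrt{n}\,\phi_{n-1}$ ($a\phi_0=0$), $a^\dagger\phi_n=\sqrt{n+1}\,\phi_{n+1}$, extended linearly. $f(a^\dagger a)$ has domain $\mathcal{D}_0$ and $f(a^\dagger a)\phi_n=f(n)\phi_n$. *)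

From Stdlib Require Import Reals.
From Coquelicot Require Import Coquelicot.
Open Scope R_scope.

(* H = l^2(N): a vector is its coefficient sequence w.r.t. (phi_n). *)
Definition vec := nat -> C.

Definition l2 (psi : vec) : Prop := ex_series (fun n => (Cmod (psi n)) ^ 2).

(* D_0: finitely supported sequences (finite combinations of the phi_n). *)
Definition fin_supp (u : vec) : Prop := exists N : nat, forall m, (N <= m)%nat -> u m = 0%C.

Definition phi (n : nat) : vec := fun m => if Nat.eqb m n then 1%C else 0%C.

Fixpoint csum (g : nat -> C) (M : nat) : C :=
  match M with O => 0%C | S M' => Cplus (csum g M') (g M') end.

(* a phi_n = sqrt n phi_{n-1}:  (a u)_m = sqrt(m+1) u_{m+1} *)
Definition ann (u : vec) : vec := fun m => Cmult (RtoC (sqrt (INR (S m)))) (u (S m)).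
(* a^dag phi_n = sqrt(n+1) phi_{n+1}: (a^dag u)_0 = 0, (a^dag u)_{m+1} = sqrt(m+1) u_m *)
Definition cre (u : vec) : vec := fun m =>
  match m with O => 0%C | S m' => Cmult (RtoC (sqrt (INR m))) (u m') end.
(* f(a^dag a) phi_n = f(n) phi_n *)
Definition fN (f : nat -> R) (u : vec) : vec := fun m => Cmult (RtoC (f m)) (u m).

Fixpoint opow (T : vec -> vec) (k : nat) (u : vec) : vec :=
  match k with O => u | S k' => T (opow T k' u) end.

Definition Aop (k l : nat) (xi : C) (f : nat -> R) (u : vec) : vec := fun m =>
  Cplus (Cplus (Cmult xi (opow cre k (opow ann l u) m))
               (Cmult (Cconj xi) (opow cre l (opow ann k u) m)))
        (fN f u m).

(* <v, psi> = 0 for finitely supported v (inner product antilinear in 1st slot) *)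
Definition orth (v psi : vec) : Prop :=
  forall M : nat, (forall m, (M <= m)%nat -> v m = 0%C) ->
    csum (fun m => Cmult (Cconj (v m)) (psi m)) M = 0%C.

Definition ran_perp (T : vec -> vec) (z : C) (psi : vec) : Prop :=
  l2 psi /\ forall u, fin_supp u -> orth (fun m => Cplus (T u m) (Cmult z (u m))) psi.

Definition has_indep (V : vec -> Prop) (n : nat) : Prop :=
  exists v : nat -> vec, (forall i, (i < n)%nat -> V (v i)) /\
    forall c : nat -> C,
      (forall m, csum (fun i => Cmult (c i) (v i m)) n = 0%C) ->
      forall i, (i < n)%nat -> c i = 0%C.

(* equal dimension (in {0,1,...,infinity}) of two subspaces *)
Definition same_dim (V W : vec -> Prop) : Prop :=
  forall n : nat, has_indep V n <-> has_indep W n.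

From Stdlib Require Import Reals Lia FunctionalExtensionality.
From Coquelicot Require Import Coquelicot.

(* Choose u with |u| = 1 and xi u = conj xi, and let J be the antiunitary map
   (J psi)_m = conj (c_m psi_m) with the phases c_m = u ^ (m / (k - l)).  Since
   a^j and (a^dag)^j shift the phase sequence by j, and c_(m+k) = u c_(m+l),
   the two off-diagonal terms of A pick up the factors u and conj u, which are
   absorbed by xi and conj xi; so J commutes with A.  An antiunitary map
   commuting with A sends Ran(A + z)^perp into Ran(A + conj z)^perp, and being
   injective and antilinear it preserves linear independence. *)

Local Open Scope C_scope.

Lemma Cconj_RtoC (r : R) : Cconj (RtoC r) = RtoC r.
Proof. apply injective_projections; simpl; ring. Qed.

Lemma Cconj_Ci : Cconj Ci = - Ci.
Proof. apply injective_projections; simpl; ring. Qed.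

Lemma Cmod_1_mult_conj (u : C) : Cmod u = 1%R -> u * Cconj u = 1.
Proof. intro Hu. rewrite <- Cmod2_conj, Hu. apply injective_projections; simpl; ring. Qed.

Lemma Cmult_eq_0_reg_l (a b : C) : a <> 0 -> a * b = 0 -> b = 0.
Proof. intros Ha Hab. replace b with (/ a * (a * b)) by (field; exact Ha). rewrite Hab; ring. Qed.

Lemma csum_conj (g : nat -> C) (M : nat) :
  csum (fun m => Cconj (g m)) M = Cconj (csum g M).
Proof.
  induction M as [|M IH]; simpl.
  - now rewrite Cconj_RtoC.
  - now rewrite IH, Cplus_conj.
Qed.

Lemma csum_mult_l (a : C) (g : nat -> C) (M : nat) :
  csum (fun m => a * g m) M = a * csum g M.
Proof. induction M as [|M IH]; simpl; [ring | rewrite IH; ring]. Qed.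

Lemma exists_unimodular_conj_ratio (xi : C) :
  exists u : C, Cmod u = 1%R /\ xi * u = Cconj xi.
Proof.
  destruct (Ceq_dec xi 0) as [-> | Hxi].
  - exists 1. split; [apply Cmod_1 | rewrite Cconj_RtoC; ring].
  - exists (Cconj xi / xi). split.
    + rewrite Cmod_div, Cmod_conj by exact Hxi. field.
      intro H. apply Hxi, Cmod_eq_0, H.
    + field. exact Hxi.
Qed.

Lemma Cpow_div_add (u : C) (d m : nat) :
  (0 < d)%nat -> u ^ ((m + d) / d) = u * u ^ (m / d).
Proof.
  intro Hd. replace (m + d)%nat with (m + 1 * d)%nat by lia.
  rewrite Nat.div_add, Nat.add_1_r by lia. reflexivity.
Qed.

Definition twist (c : nat -> C) (v : vec) : vec := fun m => Cconj (c m * v m).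
Definition shift (j : nat) (c : nat -> C) : nat -> C := fun m => c (m + j)%nat.
Definition smul (a : C) (v : vec) : vec := fun m => a * v m.

Lemma shift_S_l (j : nat) (c : nat -> C) : shift 1 (shift j c) = shift (S j) c.
Proof. apply functional_extensionality; intro m; unfold shift; f_equal; lia. Qed.

Lemma shift_S_r (j : nat) (c : nat -> C) : shift (S j) c = shift j (shift 1 c).
Proof. apply functional_extensionality; intro m; unfold shift; f_equal; lia. Qed.

Lemma ann_twist (c : nat -> C) (v : vec) : ann (twist c v) = twist (shift 1 c) (ann v).
Proof.
  apply functional_extensionality; intro m; unfold ann, twist, shift.
  rewrite Nat.add_1_r, !Cmult_conj, Cconj_RtoC. ring.
Qed.

Lemma cre_twist (c : nat -> C) (v : vec) : cre (twist (shift 1 c) v) = twist c (cre v).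
Proof.
  apply functional_extensionality; intros [|m]; unfold cre, twist, shift.
  - rewrite Cmult_0_r, Cconj_RtoC. reflexivity.
  - rewrite Nat.add_1_r, !Cmult_conj, Cconj_RtoC. ring.
Qed.

Lemma opow_ann_twist (j : nat) (c : nat -> C) (v : vec) :
  opow ann j (twist c v) = twist (shift j c) (opow ann j v).
Proof.
  induction j as [|j IH]; simpl.
  - apply functional_extensionality; intro m; unfold twist, shift.
    now rewrite Nat.add_0_r.
  - now rewrite IH, ann_twist, shift_S_l.
Qed.

Lemma opow_cre_twist (j : nat) (c : nat -> C) (v : vec) :
  opow cre j (twist (shift j c) v) = twist c (opow cre j v).
Proof.
  revert c; induction j as [|j IH]; intro c; simpl.
  - f_equal. apply functional_extensionality; intro m; unfold shift.
    now rewrite Nat.add_0_r.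
  - now rewrite shift_S_r, IH, cre_twist.
Qed.

Lemma cre_smul (a : C) (v : vec) : cre (smul a v) = smul a (cre v).
Proof.
  apply functional_extensionality; intros [|m]; unfold cre, smul; ring.
Qed.

Lemma opow_smul (T : vec -> vec) (a : C) (j : nat) (v : vec) :
  (forall w, T (smul a w) = smul a (T w)) ->
  opow T j (smul a v) = smul a (opow T j v).
Proof. intro HT; induction j as [|j IH]; simpl; [reflexivity | now rewrite IH]. Qed.

Section AopTwist.

Variables (k l : nat) (xi u : C) (f : nat -> R) (c : nat -> C).
Hypothesis u_unimodular : u * Cconj u = 1.
Hypothesis xi_u : xi * u = Cconj xi.
Hypothesis c_shift : forall m, c (m + k)%nat = u * c (m + l)%nat.

Lemma twist_shift_l (v : vec) :
  twist (shift l c) v = twist (shift k c) (smul (Cconj u) v).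
Proof.
  apply functional_extensionality; intro m; unfold twist, shift, smul.
  rewrite c_shift. f_equal.
  transitivity ((u * Cconj u) * (c (m + l)%nat * v m)); [rewrite u_unimodular |]; ring.
Qed.

Lemma twist_shift_k (v : vec) :
  twist (shift k c) v = twist (shift l c) (smul u v).
Proof.
  apply functional_extensionality; intro m; unfold twist, shift, smul.
  rewrite c_shift. f_equal. ring.
Qed.

Lemma Aop_twist (v : vec) : Aop k l xi f (twist c v) = twist c (Aop k l xi f v).
Proof.
  apply functional_extensionality; intro m. unfold Aop, fN.
  rewrite !opow_ann_twist, twist_shift_l, (twist_shift_k (opow ann k v)),
    !opow_cre_twist, !opow_smul by exact (cre_smul _).
  unfold twist, smul.
  set (X := opow cre k (opow ann l v) m).
  set (Y := opow cre l (opow ann k v) m).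
  rewrite !Cmult_conj, !Cplus_conj, !Cmult_conj, !Cconj_conj, Cconj_RtoC, <- xi_u.
  transitivity (Cconj (c m) * (xi * u * Cconj X + xi * (u * Cconj u) * Cconj Y
                               + f m * Cconj (v m))); [ring |].
  rewrite u_unimodular. ring.
Qed.

End AopTwist.

Lemma fin_supp_twist (c : nat -> C) (v : vec) : fin_supp v -> fin_supp (twist c v).
Proof.
  intros [N HN]. exists N. intros m Hm. unfold twist.
  rewrite HN by exact Hm. rewrite Cmult_0_r. apply Cconj_RtoC.
Qed.

Lemma has_indep_twist (c : nat -> C) (V W : vec -> Prop) (n : nat) :
  (forall m, c m <> 0) -> (forall psi, V psi -> W (twist c psi)) ->
  has_indep V n -> has_indep W n.
Proof.
  intros c_neq_0 VW [v [Hv Hindep]].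
  exists (fun i => twist c (v i)). split; [intros i Hi; apply VW, Hv, Hi |].
  intros a Ha i Hi.
  assert (Hsum : forall m, csum (fun i => Cconj (a i) * v i m) n = 0).
  { intro m. apply (Cmult_eq_0_reg_l (c m)); [apply c_neq_0 |].
    rewrite <- csum_mult_l, <- (Cconj_conj (csum _ n)), <- csum_conj.
    replace (fun j => Cconj (c m * (Cconj (a j) * v j m)))
      with (fun j => a j * twist c (v j) m).
    - rewrite (Ha m). apply Cconj_RtoC.
    - apply functional_extensionality; intro j. unfold twist.
      rewrite !Cmult_conj, Cconj_conj. ring. }
  rewrite <- (Cconj_conj (a i)), (Hindep _ Hsum i Hi). apply Cconj_RtoC.
Qed.

Lemma same_dim_twist (c : nat -> C) (V W : vec -> Prop) :
  (forall m, c m <> 0) ->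
  (forall psi, V psi -> W (twist c psi)) -> (forall psi, W psi -> V (twist c psi)) ->
  same_dim V W.
Proof. intros c_neq_0 VW WV n. split; apply (has_indep_twist c); assumption. Qed.

Section UnimodularTwist.

Variable c : nat -> C.
Hypothesis c_unimodular : forall m, Cmod (c m) = 1%R.

Lemma l2_twist (psi : vec) : l2 psi -> l2 (twist c psi).
Proof.
  apply ex_series_ext. intro m. unfold twist.
  rewrite Cmod_conj, Cmod_mult, c_unimodular, Rmult_1_l. reflexivity.
Qed.

Lemma ran_perp_twist (T : vec -> vec) (z : C) (psi : vec) :
  (forall v, T (twist c v) = twist c (T v)) ->
  ran_perp T z psi -> ran_perp T (Cconj z) (twist c psi).
Proof.
  intros T_twist [Hpsi Horth]. split; [now apply l2_twist |].
  intros w Hw M HM.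
  set (g := fun m => T w m + Cconj z * w m).
  assert (Hg : (fun m => T (twist c w) m + z * twist c w m) = twist c g).
  { apply functional_extensionality; intro m. rewrite T_twist. unfold twist, g.
    rewrite !Cmult_conj, Cplus_conj, !Cmult_conj, Cconj_conj. ring. }
  assert (Hg0 : forall m, (M <= m)%nat -> twist c g m = 0).
  { intros m Hm. unfold twist, g. rewrite (HM m Hm), Cmult_0_r. apply Cconj_RtoC. }
  specialize (Horth (twist c w) (fin_supp_twist c w Hw) M). rewrite Hg in Horth.
  transitivity (Cconj (csum (fun m => Cconj (twist c g m) * psi m) M)).
  - rewrite <- csum_conj. f_equal. apply functional_extensionality; intro m.
    fold (g m). unfold twist. rewrite !Cmult_conj, !Cconj_conj. ring.
  - rewrite (Horth Hg0). apply Cconj_RtoC.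
Qed.

End UnimodularTwist.

Theorem proposition4p1 (k l : nat) (xi : C) (f : nat -> R) :
  (l < k)%nat -> (forall n, 0 <= f n)%R ->
  same_dim (ran_perp (Aop k l xi f) Ci) (ran_perp (Aop k l xi f) (Copp Ci)).
Proof.
  intros Hlk _.
  destruct (exists_unimodular_conj_ratio xi) as [u [Hu Hxi]].
  set (c := fun m => u ^ (m / (k - l))).
  assert (Hc : forall m, Cmod (c m) = 1%R).
  { intro m. unfold c. rewrite Cmod_pow, Hu. apply pow1. }
  assert (Hshift : forall m, c (m + k)%nat = u * c (m + l)%nat).
  { intro m. unfold c. rewrite <- Cpow_div_add by lia. do 2 f_equal. lia. }
  assert (A_twist : forall v, Aop k l xi f (twist c v) = twist c (Aop k l xi f v)).
  { apply (Aop_twist k l xi u); [apply Cmod_1_mult_conj |..]; assumption. }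
  apply (same_dim_twist c); [| intros psi Hpsi ..].
  - intros m Hm. apply R1_neq_R0. rewrite <- (Hc m), Hm. apply Cmod_0.
  - rewrite <- Cconj_Ci. exact (ran_perp_twist c Hc _ _ _ A_twist Hpsi).
  - replace Ci with (Cconj (Copp Ci)) by (rewrite Copp_conj, Cconj_Ci; ring).
    exact (ran_perp_twist c Hc _ _ _ A_twist Hpsi).
Qed.
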